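(* Let $\Gamma^{-1}$ be an irreducible $n\times n$ $M$-matrix (the inverse of a strictly positive definite matrix $\Gamma$), and suppose that $(\Gamma^{-1})_{i,j}=0$ for some $i\neq j$. Let $k=\min\{l>1: (\Gamma^{-l})_{i,j}\neq0\}$, where $\Gamma^{-l}=(\Gamma^{-1})^l$. Then $k\le n-1$ and $(\Gamma^{-k})_{i,j}=(-1)^k\,|(\Gamma^{-k})_{i,j}|$.
   Context: A non-singular matrix $A$ is an $M$-matrix if all entries of $A^{-1}$ are non-negative and $A_{i,j}\le0$ for $i\ne j$. A symmetric matrix is irreducible if it is not a direct sum of square matrices. *)

From HB Require Import structures.
From mathcomp Require Import all_boot all_order all_algebra.
Set Implicit Arguments. Unset Strict Implicit. Unset Printing Implicit Defensive.
Import Order.TTheory GRing.Theory Num.Theory.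
Local Open Scope ring_scope.

Definition mxpow (R : pzRingType) (n : nat) (A : 'M[R]_n) (l : nat) : 'M[R]_n :=
  iter l (mulmx A) 1%:M.

Definition sym_posdef (R : realFieldType) (n : nat) (G : 'M[R]_n) : Prop :=
  G^T = G /\ forall x : 'cV[R]_n, x != 0 -> 0 < (x^T *m G *m x) 0 0.

Definition Mmatrix (R : realFieldType) (n : nat) (A : 'M[R]_n) : Prop :=
  [/\ A \in unitmx,
      forall i j, 0 <= invmx A i j &
      forall i j, i != j -> A i j <= 0].

(* Irreducible (symmetric) matrix: it is not, up to a simultaneous
   permutation of rows and columns, a direct sum of two square blocks;
   i.e. no proper nonempty index set S decouples from its complement. *)
Definition irreducible_mx (R : pzRingType) (n : nat) (A : 'M[R]_n) : Prop :=
  forall S : {set 'I_n},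
    (forall i j, i \in S -> j \notin S -> A i j = 0) ->
    S = set0 \/ S = [set: 'I_n].

From HB Require Import structures.
From mathcomp Require Import all_boot all_order all_algebra.
From mathcomp Require Import ring zify.
Set Implicit Arguments. Unset Strict Implicit. Unset Printing Implicit Defensive.
Import Order.TTheory GRing.Theory Num.Theory.
Local Open Scope ring_scope.

(* Read the off-diagonal support of A as a graph on the indices, with an edge
   v -- w when A v w != 0.  Writing d(v) for the graph distance to j, the
   entry (A^m) v j vanishes when d(v) > m, and when d(v) = m it is a sum of
   products of m off-diagonal entries, all <= 0, at least one path of which
   is nonzero; hence (-1)^m (A^m) v j > 0.  Irreducibility makes the graph
   connected, so d(i) <= n - 1, and A i j = 0 forces d(i) >= 2.  The integer
   k of the statement is therefore d(i).  Only the sign of the off-diagonal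
   entries and irreducibility are needed. *)

Section DistanceBalls.

Variables (R : pzRingType) (n : nat) (A : 'M[R]_n) (j : 'I_n).

Definition neighbourhood (X : {set 'I_n}) : {set 'I_n} :=
  X :|: [set v | [exists w in X, (v != w) && (A v w != 0)]].

Definition ball (m : nat) : {set 'I_n} := iter m neighbourhood [set j].

Definition open_ball (m : nat) : {set 'I_n} :=
  if m is m'.+1 then ball m' else set0.

Lemma mem_neighbourhood (X : {set 'I_n}) v :
  (v \in neighbourhood X) =
  (v \in X) || [exists w in X, (v != w) && (A v w != 0)].
Proof. by rewrite !inE. Qed.

Lemma neighbourhood_adj (X : {set 'I_n}) v w :
  w \in X -> v != w -> A v w != 0 -> v \in neighbourhood X.
Proof.
move=> wX vw Avw; rewrite mem_neighbourhood; apply/orP; right.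
by apply/existsP; exists w; rewrite wX vw Avw.
Qed.

Lemma ballS m : ball m.+1 = neighbourhood (ball m).
Proof. by []. Qed.

Lemma ball_sub_ballS m : ball m \subset ball m.+1.
Proof. exact: subsetUl. Qed.

Lemma ball_mono m m' : (m <= m')%N -> ball m \subset ball m'.
Proof.
move=> /subnK <-; elim: (m' - m)%N => [|d IH]; rewrite ?add0n //.
by rewrite addSn; apply: subset_trans IH (ball_sub_ballS _).
Qed.

Lemma center_in_ball m : j \in ball m.
Proof. by apply: (subsetP (ball_mono (leq0n m))); rewrite inE. Qed.

Lemma open_ball_adj m v w :
  w \in open_ball m -> v != w -> A v w != 0 -> v \in ball m.
Proof. by case: m => [|m] /=; [rewrite inE | exact: neighbourhood_adj]. Qed.

Lemma ball_card_or_closed m :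
  (m < #|ball m|)%N \/ neighbourhood (ball m) = ball m.
Proof.
elim: m => [|m IH]; first by left; rewrite cards1.
have [stable|grows] := eqVneq (neighbourhood (ball m)) (ball m).
  by right; rewrite ballS stable.
case: IH => [lt|stable]; last by rewrite stable eqxx in grows.
left; apply: leq_ltn_trans lt (proper_card _).
by rewrite properEneq ball_sub_ballS andbT eq_sym.
Qed.

Lemma closed_set_full (X : {set 'I_n}) :
  irreducible_mx A -> neighbourhood X = X -> j \in X -> X = [set: 'I_n].
Proof.
move=> irr stable jX.
have decoupled a b : a \in ~: X -> b \notin ~: X -> A a b = 0.
  rewrite !inE negbK => aX bX; have ab : a != b by apply: contraNneq aX => ->.
  apply/eqP; apply: contraNT aX => Aab.
  by rewrite -stable; apply: neighbourhood_adj bX ab Aab.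
case: (irr _ decoupled) => [empty|full]; first by rewrite -[X]setCK empty setC0.
by move: full => /setP /(_ j); rewrite !inE jX.
Qed.

Lemma ball_full : irreducible_mx A -> ball n.-1 = [set: 'I_n].
Proof.
move=> irr; have n_gt0 : (0 < n)%N by apply: leq_ltn_trans (ltn_ord j).
case: (ball_card_or_closed n.-1) => [lt|stable].
  apply/eqP; rewrite eqEcard subsetT cardsT card_ord.
  by move: lt n_gt0; clear; lia.
exact: closed_set_full irr stable (center_in_ball _).
Qed.

Lemma mxpowS m : mxpow A m.+1 = A *m mxpow A m.
Proof. by []. Qed.

Lemma mxpow_out_ball m v : v \notin ball m -> mxpow A m v j = 0.
Proof.
elim: m v => [|m IH] v vB.
  by rewrite mxE; move: vB; rewrite inE => /negbTE ->; rewrite mulr0n.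
rewrite mxpowS mxE; apply: big1 => w _.
have [<-|vw] := eqVneq v w.
  by rewrite IH ?mulr0 //; apply: contra vB; apply: (subsetP (ball_sub_ballS _)).
have [wB|wB] := boolP (w \in ball m); last by rewrite IH ?mulr0.
suff -> : A v w = 0 by rewrite mul0r.
by apply/eqP; apply: contraNT vB; apply: neighbourhood_adj wB vw.
Qed.

End DistanceBalls.

Lemma mxpow_sign_sphere (R : realFieldType) n (A : 'M[R]_n) j :
  (forall v w, v != w -> A v w <= 0) ->
  forall m v, v \in ball A j m -> v \notin open_ball A j m ->
  0 < (-1) ^+ m * mxpow A m v j.
Proof.
move=> off; elim=> [|m IH] v vB vO.
  by move: vB; rewrite inE => /eqP ->; rewrite mxE eqxx mulr1n expr0 mul1r ltr01.
have /existsP [w /andP [wB /andP [vw Avw]]] :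
    [exists w in ball A j m, (v != w) && (A v w != 0)].
  by move: vB; rewrite ballS mem_neighbourhood (negbTE vO).
have wO : w \notin open_ball A j m.
  by apply: contra vO => wO; apply: open_ball_adj wO vw Avw.
have signed_term u : (-1) ^+ m.+1 * (A v u * mxpow A m u j) =
    - A v u * ((-1) ^+ m * mxpow A m u j) by rewrite exprS; ring.
have term_ge0 u : 0 <= (-1) ^+ m.+1 * (A v u * mxpow A m u j).
  have [<-|vu] := eqVneq v u; first by rewrite mxpow_out_ball ?mulr0.
  have [uO|uO] := boolP (u \in open_ball A j m).
    suff -> : A v u = 0 by rewrite mul0r mulr0.
    by apply/eqP; apply: contraNT vO; apply: open_ball_adj uO vu.
  have [uB|uB] := boolP (u \in ball A j m); last by rewrite mxpow_out_ball ?mulr0.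
  rewrite signed_term mulr_ge0 ?oppr_ge0 ?off //.
  exact: ltW (IH u uB uO).
rewrite mxpowS mxE mulr_sumr (bigD1 w) //= ltr_pwDl //.
  by rewrite signed_term mulr_gt0 ?IH // oppr_gt0 lt_neqAle Avw off.
by apply: sumr_ge0 => u _; apply: term_ge0.
Qed.

Lemma signr_normr_of_gt0 (R : realDomainType) k (x : R) :
  0 < (-1) ^+ k * x -> x = (-1) ^+ k * `|x|.
Proof.
move=> pos; have -> : `|x| = (-1) ^+ k * x.
  by rewrite -(gtr0_norm pos) normrM normrX normrN1 expr1n mul1r.
by rewrite mulrA -exprD addnn -mul2n exprM sqrrN !expr1n mul1r.
Qed.

Theorem lemma2p2 (R : realFieldType) (n : nat) (G : 'M[R]_n) (i j : 'I_n) :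
  sym_posdef G ->
  Mmatrix (invmx G) ->
  irreducible_mx (invmx G) ->
  i != j ->
  invmx G i j = 0 ->
  exists k : nat,
    [/\ (1 < k)%N,
        mxpow (invmx G) k i j != 0,
        (forall l : nat, (1 < l < k)%N -> mxpow (invmx G) l i j = 0),
        (k <= n.-1)%N &
        mxpow (invmx G) k i j = (-1) ^+ k * `|mxpow (invmx G) k i j| ].
Proof.
move=> _ [_ _ off] irr ij Aij; set A := invmx G in off irr Aij *.
have reached : exists m, i \in ball A j m.
  by exists n.-1; rewrite ball_full ?inE.
case: (ex_minnP reached) => k iB k_min.
have k_le : (k <= n.-1)%N by apply: k_min; rewrite ball_full ?inE.
have iO : i \notin open_ball A j k.
  case: k iB k_min {k_le} => [|k] _ k_min; first by rewrite inE.
  by apply/negP => /k_min; rewrite ltnn.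
have sign := mxpow_sign_sphere off iB iO.
have k_gt1 : (1 < k)%N.
  case: k iB {k_min k_le iO sign} => [|[|//]]; first by rewrite inE (negbTE ij).
  rewrite ballS mem_neighbourhood inE (negbTE ij) /=.
  by case/existsP=> w /andP [/set1P -> /andP [_]]; rewrite Aij eqxx.
exists k; split=> //.
- by apply: contraTneq sign => ->; rewrite mulr0 ltxx.
- move=> l /andP [_ lk]; apply: mxpow_out_ball; apply/negP => /k_min.
  by rewrite leqNgt lk.
- exact: signr_normr_of_gt0 sign.
Qed.
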